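(* Let $i,j,k$ be distinct jobs such that $(i,j)$ and $(i,k)$ are red pairs and $t_j\le t_k$. Then $D^*(j,k)\ge(\nu+\nu^2)t_k$ and, in the schedule produced by $1$-SORT, $D(j,k)\le\left(1+\frac{1}{\nu+\nu^2}\right)D^*(j,k)$.
   Context: Setting: single machine, jobs $J=\{1,\dots,n\}$, each job $j$ with test time $t_j\ge0$ and processing time $p_j\ge0$ (revealed only when the test is executed); each job's test must be executed before its processing part, which may start any time after the test; operations are non-preemptive and the machine does one at a time. $\sigma_j=t_j+p_j$, $m_j=\max\{t_j,p_j\}$. Standing assumption (general position): no two of the $3n$ numbers $t_j,p_j,\sigma_j$ are equal. Algorithm $1$-SORT: keep a priority queue of available operations, initially the test of every job $j$ with priority $t_j$; repeatedly remove a minimum-priority operation and execute it immediately; after executing the test of $j$, insert the processing part of $j$ with priority $p_j$. For distinct jobs $j,k$, let $d_{k,j}$ be the total amount of time during which operations of $k$ are executed before the completion time of $j$, and $D(j,k)=d_{j,k}+d_{k,j}$, evaluated for the $1$-SORT schedule; $D^*(j,k)=\min\{\sigma_j,\sigma_k\}$. Fix constants $\mu>1$ and $0<\nu<1$ with $\mu\nu>1$ and $1+\frac1\mu\le\nu+\nu^2$. A job $j$ is imbalanced if $m_j\ge\mu\min\{t_j,p_j\}$. For distinct jobs $j,k$, the ordered pair $(j,k)$ is a red pair if $j$ is imbalanced, $m_j\ge t_k\ge\nu m_j$, and $p_k\ge\nu t_k$. *)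

From mathcomp Require Import all_boot all_order all_algebra.
Set Implicit Arguments. Unset Strict Implicit. Unset Printing Implicit Defensive.
Import Order.TTheory GRing.Theory Num.Theory.
Local Open Scope ring_scope.

Section Testing.
Variables (R : realFieldType) (n : nat) (t p : 'I_n -> R).

(* An operation: (j, false) = test of job j, (j, true) = processing part of j. *)
Definition op := ('I_n * bool)%type.

(* length of an operation = its 1-SORT priority *)
Definition oplen (o : op) : R := if o.2 then p o.1 else t o.1.

Definition sigma (j : 'I_n) : R := t j + p j.
Definition mjob (j : 'I_n) : R := Num.max (t j) (p j).

(* minimum-priority operation of the queue x0 :: s (first one in case of ties,
   which never occur under general position) *)
Definition pick_min (x0 : op) (s : seq op) : op :=
  foldl (fun a b => if oplen b < oplen a then b else a) x0 s.

Fixpoint sort1_run (fuel : nat) (queue : seq op) : seq op :=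
  match fuel with
  | 0 => [::]
  | f.+1 =>
    match queue with
    | [::] => [::]
    | o :: q' =>
      let m := pick_min o q' in
      m :: sort1_run f (rem m queue ++ (if m.2 then [::] else [:: (m.1, true)]))
    end
  end.

(* The sequence of operations, in execution order, of the 1-SORT schedule
   (executed back to back without idle time). *)
Definition sort1_schedule : seq op :=
  sort1_run (2 * n) [seq (j, false) | j <- enum 'I_n].

(* d k j: total time during which operations of k are executed before the
   completion time of j (= completion of the processing part of j). *)
Definition dtime (k j : 'I_n) : R :=
  let s := sort1_schedule in
  \sum_(o <- take (index (j, true) s).+1 s | o.1 == k) oplen o.

Definition Dpair (j k : 'I_n) : R := dtime j k + dtime k j.
Definition Dstar (j k : 'I_n) : R := Num.min (sigma j) (sigma k).

(* general position: the 3n numbers t_j, p_j, sigma_j are pairwise distinct *)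
Definition val3 (j : 'I_n) (c : 'I_3) : R :=
  if val c == 0%N then t j else if val c == 1%N then p j else sigma j.
Definition general_position : Prop :=
  forall (a b : 'I_n) (x y : 'I_3), (a, x) != (b, y) -> val3 a x != val3 b y.

Definition imbalanced (mu : R) (j : 'I_n) : Prop :=
  mjob j >= mu * Num.min (t j) (p j).

Definition red_pair (mu nu : R) (j k : 'I_n) : Prop :=
  [/\ j != k, imbalanced mu j, mjob j >= t k, t k >= nu * mjob j
    & p k >= nu * t k].

End Testing.

(* Every operation of a job with short test and processing parts overtakes, in
   1-SORT, every operation that is longer than both.  Comparing the test and
   processing lengths of j and k, this leaves three orders of the four
   operations, and in each of them D(j,k) exceeds D*(j,k) by at most t_k.
   The red pairs (i,j), (i,k) make both sigma_j and sigma_k at least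
   (nu + nu^2) m_i >= (nu + nu^2) t_k, so the additive error t_k is at most
   D*(j,k) / (nu + nu^2). *)

From mathcomp Require Import all_boot all_order all_algebra.
From mathcomp Require Import lra zify.
Set Implicit Arguments. Unset Strict Implicit. Unset Printing Implicit Defensive.
Import Order.TTheory GRing.Theory Num.Theory.
Local Open Scope ring_scope.

Lemma index_cons (T : eqType) (x y : T) s :
  index x (y :: s) = if y == x then 0%N else (index x s).+1.
Proof. by []. Qed.

Section OneSort.
Variables (R : realFieldType) (n : nat) (t p : 'I_n -> R).
Local Notation len := (oplen t p).
Local Notation run := (sort1_run t p).
Local Notation sched := (sort1_schedule t p).

Lemma mem_pick_min x0 s : pick_min t p x0 s \in x0 :: s.
Proof.
elim: s x0 => [|y s IH] x0 /=; first by rewrite inE.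
move: (IH (if len y < len x0 then y else x0)); rewrite /pick_min /=.
case: ifP => _; rewrite !inE => /orP[/eqP->|->]; rewrite ?eqxx ?orbT //.
Qed.

Lemma pick_min_le x0 s o : o \in x0 :: s -> len (pick_min t p x0 s) <= len o.
Proof.
elim: s x0 o => [|y s IH] x0 o /=; first by rewrite inE => /eqP->.
rewrite /pick_min /=; set x1 := (if len y < len x0 then y else x0).
have le_x1 : len (pick_min t p x1 s) <= len x1 by apply: IH; rewrite inE eqxx.
rewrite !inE => /or3P[/eqP->|/eqP->|os]; last by apply: IH; rewrite inE os orbT.
- by apply: le_trans le_x1 _; rewrite /x1; case: ifP => // /ltW.
- by apply: le_trans le_x1 _; rewrite /x1; case: ifP => // /negbT; rewrite -leNgt.
Qed.

Definition next_queue (q : seq (op n)) (m : op n) :=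
  rem m q ++ (if m.2 then [::] else [:: (m.1, true)]).

Lemma run_cons f o q : run f.+1 (o :: q) =
  pick_min t p o q :: run f (next_queue (o :: q) (pick_min t p o q)).
Proof. by []. Qed.

Definition wf_queue (q : seq (op n)) :=
  uniq q /\ forall x, (x, false) \in q -> (x, true) \notin q.

(* An operation is pending if it is queued or is the processing part of a
   queued test: these are exactly the operations 1-SORT will still execute. *)
Definition pending (q : seq (op n)) (o : op n) :=
  (o \in q) || (o.2 && ((o.1, false) \in q)).

(* The number of operations still to be executed; every step of 1-SORT
   decreases it by one. *)
Definition qweight (q : seq (op n)) := (\sum_(o <- q) if o.2 then 1 else 2)%N.

Lemma pending_nil o : pending [::] o = false.
Proof. by rewrite /pending !in_nil andbF. Qed.

Lemma qweight_cons_gt0 o q : (0 < qweight (o :: q))%N.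
Proof. by rewrite /qweight big_cons; case: (o.2). Qed.

Lemma mem_next_queue q m o : uniq q -> o \in q -> o != m -> o \in next_queue q m.
Proof. by move=> uq oq om; rewrite mem_cat (mem_rem_uniq _ uq) inE oq om. Qed.

Lemma proc_mem_next_queue q x : (x, true) \in next_queue q (x, false).
Proof. by rewrite /next_queue mem_cat inE eqxx orbT. Qed.

Lemma mem_next_queueP q m o : o \in next_queue q m ->
  o \in q \/ (m.2 = false /\ o = (m.1, true)).
Proof.
rewrite mem_cat => /orP[/mem_rem|]; first by left.
by case: (m.2); rewrite // inE => /eqP; right.
Qed.

Lemma wf_next_queue q m : wf_queue q -> m \in q -> wf_queue (next_queue q m).
Proof.
case: m => x b [uq testq] mq; split.
  rewrite /next_queue; case: b mq => mq /=; first by rewrite cats0 rem_uniq.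
  rewrite cat_uniq rem_uniq //= andbT orbF.
  by apply/negP => /mem_rem procq; move: (testq x mq); rewrite procq.
move=> y test_next; apply/negP => /mem_next_queueP [procq|[/= b0 [xy]]].
  case/mem_next_queueP: test_next => [yq|[_ []//]].
  by move: (testq y yq); rewrite procq.
move: test_next; rewrite /next_queue b0 -xy mem_cat (mem_rem_uniq _ uq) !inE /=.
by rewrite eqxx !xpair_eqE andbF.
Qed.

Lemma qweight_next_queue q m : m \in q -> (qweight (next_queue q m)).+1 = qweight q.
Proof.
move=> mq; rewrite /qweight (perm_big _ (perm_to_rem mq)) big_cons big_cat /= addnC.
by case: (m.2); rewrite ?big_cons big_nil.
Qed.

Lemma pending_next_queue q m o : uniq q -> m \in q -> pending q o -> o != m ->
  pending (next_queue q m) o.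
Proof.
rewrite /pending => uq mq /orP[oq|/andP[o2 testq]] om; first by rewrite mem_next_queue.
have [m_test|m_not_test] := eqVneq m (o.1, false).
  by case: o o2 {om testq} m_test => x [] //= _ ->; rewrite proc_mem_next_queue.
by apply/orP; right; rewrite o2 mem_next_queue // eq_sym.
Qed.

Lemma pending_of_next_queue q m o : m \in q -> pending (next_queue q m) o -> pending q o.
Proof.
rewrite /pending => mq /orP[/mem_next_queueP [oq|[m2 ->]]|/andP[o2 /mem_next_queueP [oq|[]//]]].
- by rewrite oq.
- by case: m mq m2 => x b mq /= m2; rewrite m2 in mq; rewrite mq orbT.
- by rewrite o2 oq orbT.
Qed.

Lemma not_pending_next_queue q m : wf_queue q -> m \in q -> ~~ pending (next_queue q m) m.
Proof.
case: m => x b [uq testq] mq; rewrite /pending negb_or; apply/andP; split.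
  rewrite /next_queue mem_cat (mem_rem_uniq _ uq) inE eqxx /=.
  by case: b {mq}; rewrite //= inE xpair_eqE andbF.
apply/negP => /andP[/= b1 /mem_next_queueP [testq'|[]]]; last by rewrite b1.
by rewrite b1 in mq; move: (testq x testq'); rewrite mq.
Qed.

Lemma mem_run f q o : wf_queue q -> (qweight q <= f)%N -> pending q o -> o \in run f q.
Proof.
elim: f q => [|f IH] [|o0 q] wq fuel; rewrite ?pending_nil //.
  by have := qweight_cons_gt0 o0 q; lia.
rewrite run_cons; set m := pick_min t p o0 q => po.
have mq : m \in o0 :: q := mem_pick_min _ _.
rewrite inE; have [//|om] := eqVneq o m; apply: IH.
- exact: wf_next_queue.
- by have := qweight_next_queue mq; lia.
- by apply: pending_next_queue => //; case: wq.
Qed.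

Lemma pending_of_mem_run f q o : o \in run f q -> pending q o.
Proof.
elim: f q => [|f IH] [|o0 q] //; rewrite run_cons inE => /orP[/eqP->|/IH].
  by rewrite /pending mem_pick_min.
exact: pending_of_next_queue (mem_pick_min _ _).
Qed.

Lemma uniq_run f q : wf_queue q -> uniq (run f q).
Proof.
elim: f q => [|f IH] [|o0 q] wq //; have mq := mem_pick_min o0 q.
rewrite run_cons /= IH ?andbT; last exact: wf_next_queue.
apply: contraFN (negbTE (not_pending_next_queue wq mq)); exact: pending_of_mem_run.
Qed.

Lemma run_test_before_proc f q x : wf_queue q -> (qweight q <= f)%N -> (x, false) \in q ->
  (index (x, false) (run f q) < index (x, true) (run f q))%N.
Proof.
elim: f q => [|f IH] [|o0 q] wq fuel; rewrite ?in_nil //.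
  by have := qweight_cons_gt0 o0 q; lia.
move=> testq; rewrite run_cons !index_cons; set m := pick_min t p o0 q.
have mq : m \in o0 :: q := mem_pick_min _ _.
have /negbTE -> : m != (x, true).
  by apply: contraTneq mq => ->; case: wq => _; apply.
have [//|m_not_test] := eqVneq m (x, false); rewrite ltnS; apply: IH.
- exact: wf_next_queue.
- by have := qweight_next_queue mq; lia.
- by apply: mem_next_queue; [case: wq | | rewrite eq_sym].
Qed.

(* The one scheduling principle used: a pending operation [a] is executed before
   a pending operation [b] of larger priority, provided the test that still
   has to precede [a] is shorter than [b] as well. *)
Lemma run_index_lt f q a b : wf_queue q -> (qweight q <= f)%N ->
  pending q a -> pending q b -> len a < len b -> (a \notin q -> t a.1 < len b) ->
  (index a (run f q) < index b (run f q))%N.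
Proof.
elim: f q => [|f IH] [|o0 q] wq fuel; rewrite ?pending_nil //.
  by have := qweight_cons_gt0 o0 q; lia.
move=> pa pb lab ta; rewrite run_cons !index_cons; set m := pick_min t p o0 q.
have mq : m \in o0 :: q := mem_pick_min _ _.
have m_min o : o \in o0 :: q -> len m <= len o := @pick_min_le o0 q o.
have uq : uniq (o0 :: q) by case: wq.
have mb : m != b.
  apply/eqP => m_eq_b; have [aq|a_not_q] := boolP (a \in o0 :: q).
    by have := m_min _ aq; rewrite m_eq_b leNgt lab.
  move: pa; rewrite /pending (negbTE a_not_q) => /andP[_ /m_min].
  by rewrite m_eq_b leNgt ta.
rewrite (negbTE mb); have [//|ma] := eqVneq m a.
have am : a != m by rewrite eq_sym.
have bm : b != m by rewrite eq_sym.
rewrite ltnS; apply: IH => //.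
- exact: wf_next_queue.
- by have := qweight_next_queue mq; lia.
- exact: pending_next_queue uq mq pa am.
- exact: pending_next_queue uq mq pb bm.
- move=> a_not_next; apply: ta; apply: contra a_not_next => aq.
  exact: mem_next_queue uq aq am.
Qed.

Lemma sum_job_ops (r : seq (op n)) x : uniq r ->
  \sum_(o <- r | o.1 == x) len o =
  (if (x, false) \in r then t x else 0) + (if (x, true) \in r then p x else 0).
Proof.
elim: r => [|[y b] r IH] /=; first by rewrite big_nil addr0.
case/andP => yr ur; rewrite big_cons /= IH // !inE !xpair_eqE.
have [<-|//] := eqVneq y x; rewrite /oplen /=.
by case: b yr => /= /negbTE ->; case: (_ \in r); rewrite /= ?addr0 ?add0r // addrC.
Qed.

Definition initial_queue : seq (op n) := [seq (j, false) | j <- enum 'I_n].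

Lemma wf_initial_queue : wf_queue initial_queue.
Proof.
split; first by rewrite map_inj_uniq ?enum_uniq // => a b [].
by move=> x _; apply/negP => /mapP [y _] [].
Qed.

Lemma qweight_initial_queue : qweight initial_queue = (2 * n)%N.
Proof.
rewrite /qweight big_map -[in RHS](size_enum_ord n).
elim: (enum 'I_n) => [|a l IH]; first by rewrite big_nil.
by rewrite big_cons /= IH mulnS.
Qed.

Lemma test_mem_initial_queue x : (x, false) \in initial_queue.
Proof. by rewrite map_f ?mem_enum. Qed.

Lemma pending_initial_queue o : pending initial_queue o.
Proof. by case: o => x [|]; rewrite /pending test_mem_initial_queue ?orbT. Qed.

Lemma uniq_sched : uniq sched.
Proof. exact: uniq_run wf_initial_queue. Qed.

Lemma mem_sched o : o \in sched.
Proof.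
apply: mem_run; [exact: wf_initial_queue | by rewrite qweight_initial_queue |].
exact: pending_initial_queue.
Qed.

Lemma sched_test_before_proc x : (index (x, false) sched < index (x, true) sched)%N.
Proof.
apply: run_test_before_proc; [exact: wf_initial_queue | by rewrite qweight_initial_queue |].
exact: test_mem_initial_queue.
Qed.

Lemma sched_index_lt a b : len a < len b -> (a.2 -> t a.1 < len b) ->
  (index a sched < index b sched)%N.
Proof.
move=> lab ta; apply: run_index_lt; rewrite ?qweight_initial_queue
  ?pending_initial_queue //; first exact: wf_initial_queue.
by case: a lab ta => x [] // _ ta _; apply: ta.
Qed.

Lemma sched_test_index_lt x b : t x < len b ->
  (index (x, false) sched < index b sched)%N.
Proof. by move=> tb; apply: sched_index_lt. Qed.

Lemma dtimeE x y : dtime t p x y =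
  (if (index (x, false) sched <= index (y, true) sched)%N then t x else 0) +
  (if (index (x, true) sched <= index (y, true) sched)%N then p x else 0).
Proof.
by rewrite /dtime sum_job_ops ?take_uniq ?uniq_sched // !in_take ?mem_sched // !ltnS.
Qed.

Lemma dtime_all_before x y :
  (index (x, true) sched <= index (y, true) sched)%N -> dtime t p x y = sigma t p x.
Proof.
move=> done_x; have tx := sched_test_before_proc x.
by rewrite dtimeE done_x ifT // (leq_trans (ltnW tx) done_x).
Qed.

Lemma dtime_test_before x y :
  (index (x, false) sched <= index (y, true) sched)%N ->
  (index (y, true) sched < index (x, true) sched)%N -> dtime t p x y = t x.
Proof. by move=> tx px; rewrite dtimeE tx leqNgt px addr0. Qed.

Lemma dtime_none_before x y :
  (index (y, true) sched < index (x, false) sched)%N -> dtime t p x y = 0.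
Proof.
move=> before_x; have tx := sched_test_before_proc x.
by rewrite dtimeE leqNgt before_x leqNgt (ltn_trans before_x tx) addr0.
Qed.

Lemma Dpair_le_Dstar_add j k : general_position t p -> (forall x, 0 <= p x) ->
  j != k -> t j <= t k -> Dpair t p j k <= Dstar t p j k + t k.
Proof.
move=> gp hp jk tjk.
have gp_jk c d : val3 t p j c != val3 t p k d by apply: gp; rewrite xpair_eqE (negbTE jk).
have {}tjk : t j < t k by rewrite lt_neqAle (gp_jk ord0 ord0) tjk.
have Fj_lt_Fk := @sched_test_index_lt j (k, false) tjk.
have Fk := sched_test_before_proc k.
have pj := hp j; have pk := hp k.
rewrite /Dpair /Dstar -lerBlDr le_min.
have [pj_tk|tk_pj|pj_eq_tk] := ltgtP (p j) (t k);
  last by move: (gp_jk (@Ordinal 3 1 isT) ord0); rewrite /val3 /= pj_eq_tk eqxx.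
- have Tj_lt_Fk := @sched_index_lt (j, true) (k, false) pj_tk (fun _ => tjk).
  rewrite (dtime_none_before Tj_lt_Fk) (dtime_all_before (ltnW (ltn_trans Tj_lt_Fk Fk))).
  by rewrite /sigma; apply/andP; split; lra.
- have Fk_lt_Tj := @sched_test_index_lt k (j, true) tk_pj.
  have [pj_pk|pk_pj|pj_eq_pk] := ltgtP (p j) (p k);
    last by move: (gp_jk (@Ordinal 3 1 isT) (@Ordinal 3 1 isT)); rewrite /val3 /= pj_eq_pk eqxx.
  + have Tj_lt_Tk := @sched_index_lt (j, true) (k, true) pj_pk
      (fun _ => lt_trans tjk (lt_trans tk_pj pj_pk)).
    rewrite (dtime_all_before (ltnW Tj_lt_Tk)) (dtime_test_before (ltnW Fk_lt_Tj) Tj_lt_Tk).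
    by rewrite /sigma; apply/andP; split; lra.
  + have Tk_lt_Tj := @sched_index_lt (k, true) (j, true) pk_pj (fun _ => tk_pj).
    rewrite (dtime_all_before (ltnW Tk_lt_Tj)).
    rewrite (dtime_test_before (ltnW (ltn_trans Fj_lt_Fk Fk)) Tk_lt_Tj).
    by rewrite /sigma; apply/andP; split; lra.
Qed.

Lemma sigma_ge_red_pair mu nu i x : 0 < nu -> red_pair t p mu nu i x ->
  (nu + nu ^+ 2) * mjob t p i <= sigma t p x.
Proof.
move=> nu0 [_ _ _ tx px]; rewrite /sigma expr2.
have : (1 + nu) * (nu * mjob t p i) <= (1 + nu) * t x by rewrite ler_wpM2l //; lra.
nra.
Qed.

Lemma Dstar_ge_red_pairs mu nu i j k : 0 < nu ->
  red_pair t p mu nu i j -> red_pair t p mu nu i k ->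
  (nu + nu ^+ 2) * t k <= Dstar t p j k.
Proof.
move=> nu0 rij rik; have [_ _ tk _ _] := rik.
have tk_mi : (nu + nu ^+ 2) * t k <= (nu + nu ^+ 2) * mjob t p i.
  by rewrite ler_wpM2l // ltW // addr_gt0 ?exprn_gt0.
rewrite /Dstar le_min; apply/andP; split; apply: le_trans tk_mi _.
  exact: sigma_ge_red_pair nu0 rij.
exact: sigma_ge_red_pair nu0 rik.
Qed.

End OneSort.

Theorem mainTheorem9 (R : realFieldType) (n : nat) (t p : 'I_n -> R)
  (mu nu : R)
  (ht : forall j, 0 <= t j) (hp : forall j, 0 <= p j)
  (hgp : general_position t p)
  (hmu : 1 < mu) (hnu0 : 0 < nu) (hnu1 : nu < 1) (hmunu : 1 < mu * nu)
  (hmunu2 : 1 + mu^-1 <= nu + nu ^+ 2)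
  (i j k : 'I_n)
  (hij : i != j) (hik : i != k) (hjk : j != k)
  (rij : red_pair t p mu nu i j) (rik : red_pair t p mu nu i k)
  (htjk : t j <= t k) :
  (nu + nu ^+ 2) * t k <= Dstar t p j k /\
  Dpair t p j k <= (1 + (nu + nu ^+ 2)^-1) * Dstar t p j k.
Proof.
have c_gt0 : 0 < nu + nu ^+ 2 by rewrite addr_gt0 ?exprn_gt0.
have Dstar_ge := Dstar_ge_red_pairs hnu0 rij rik.
split=> //.
have tk_le : t k <= Dstar t p j k / (nu + nu ^+ 2) by rewrite ler_pdivlMr // mulrC.
have := Dpair_le_Dstar_add hgp hp hjk htjk.
rewrite mulrDl mul1r (mulrC _^-1); lra.
Qed.
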